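(* Let $H$, $L$ be as in the context. For every feasible solution $(S,\mathcal T_0)$, $\omega_{LB}:=\lceil\omega(H)/L\rceil\le\omega(H_{\mathcal T_0})$.
   Context: Notation: $[n)=\{0,1,\dots,n-1\}$. Let $M,N,Z$ be positive integers and let $H$ be a binary $MZ\times NZ$ matrix made of $M\times N$ blocks, each a $Z\times Z$ circulant; assume $H$ has no zero row and no two identical rows. For $\mathcal A\subseteq[MZ)$, $H_{\mathcal A}$ is the submatrix of rows indexed by $\mathcal A$; $\omega(A)$ is the maximum Hamming weight of a column of $A$. For $i\in[MZ)$ and integer $s$, $\pi^s(i)=Z\lfloor i/Z\rfloor+((i+s)\bmod Z)$ and $\pi^s(\mathcal T)=\{\pi^s(x):x\in\mathcal T\}$. Fix an integer $L>1$. A pair $(S,\mathcal T_0)$ ($S$ a positive integer, $\mathcal T_0\subseteq[MZ)$) is a feasible solution if, with $\mathcal T_l=\pi^{lS}(\mathcal T_0)$ for $l\in[L)$, the sets $\mathcal T_0,\dots,\mathcal T_{L-1}$ are pairwise disjoint with union $[MZ)$. *)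

From mathcomp Require Import all_boot all_order all_algebra.
Set Implicit Arguments. Unset Strict Implicit. Unset Printing Implicit Defensive.

Definition piN (Z s i : nat) : nat := Z * (i %/ Z) + (i + s) %% Z.

Definition block_circulant (M N Z : nat) (H : 'M[bool]_(M * Z, N * Z)) : Prop :=
  forall (i : 'I_(M * Z)) (j : 'I_(N * Z)) (i' : 'I_(M * Z)) (j' : 'I_(N * Z)),
    val i' = piN Z 1 i -> val j' = piN Z 1 j -> H i' j' = H i j.

Definition no_zero_row (m n : nat) (H : 'M[bool]_(m, n)) : Prop :=
  forall i : 'I_m, exists j : 'I_n, H i j.

Definition distinct_rows (m n : nat) (H : 'M[bool]_(m, n)) : Prop :=
  forall i i' : 'I_m, (forall j, H i j = H i' j) -> i = i'.

Definition omega_rows (m n : nat) (H : 'M[bool]_(m, n)) (A : {set 'I_m}) : nat :=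
  \max_(j < n) #|[set i in A | H i j]|.

Definition shiftset (M Z s : nat) (T0 : {set 'I_(M * Z)}) : {set 'I_(M * Z)} :=
  [set x : 'I_(M * Z) | [exists y in T0, piN Z s (val y) == val x]].

Definition feasible (M Z L S : nat) (T0 : {set 'I_(M * Z)}) : Prop :=
  0 < S /\
  (forall l1 l2, l1 < L -> l2 < L -> l1 != l2 ->
      [disjoint shiftset (l1 * S) T0 & shiftset (l2 * S) T0]) /\
  \bigcup_(l < L) shiftset (l * S) T0 = [set: 'I_(M * Z)].

Definition ceil_div (a b : nat) : nat := (a + b.-1) %/ b.

(* Rotating every block of rows and every block of columns by the same amount
   leaves a block-circulant H unchanged, so the column weights of H restricted
   to T_l = pi^{lS}(T_0) are those of H restricted to T_0, with the columns
   rotated.  Hence omega(H_{T_l}) = omega(H_{T_0}) for every l, and since the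
   T_l cover all rows, omega(H) <= sum_l omega(H_{T_l}) = L omega(H_{T_0}). *)
From mathcomp Require Import all_boot all_order all_algebra.

Set Implicit Arguments.
Unset Strict Implicit.
Unset Printing Implicit Defensive.

Lemma piN_ltn K Z s i : 0 < Z -> i < K * Z -> piN Z s i < K * Z.
Proof.
move=> Z_gt0 i_lt; rewrite /piN.
have q_lt : i %/ Z < K by rewrite ltn_divLR.
apply: (@leq_trans (Z * (i %/ Z) + Z)); first by rewrite ltn_add2l ltn_mod.
by rewrite -mulnSr mulnC leq_mul2r q_lt orbT.
Qed.

Lemma piN_add Z a b i : 0 < Z -> piN Z a (piN Z b i) = piN Z (a + b) i.
Proof.
move=> Z_gt0; rewrite /piN.
have r_lt : (i + b) %% Z < Z by rewrite ltn_mod.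
rewrite [Z * (i %/ Z)]mulnC divnMDl // (divn_small r_lt) addn0 mulnC.
by rewrite -addnA modnMDl modnDml -addnA (addnC b).
Qed.

Lemma piN_mull Z k i : 0 < Z -> piN Z (k * Z) i = i.
Proof. by move=> Z_gt0; rewrite /piN [i + _]addnC modnMDl mulnC -divn_eq. Qed.

Lemma card_bigcup_leq (T : finType) L (B : 'I_L -> {set T}) :
  #|\bigcup_(l < L) B l| <= \sum_(l < L) #|B l|.
Proof.
elim/big_ind2: _ => [|U1 n1 U2 n2 le1 le2|//]; first by rewrite cards0.
exact: leq_trans (leq_card_setU _ _) (leq_add le1 le2).
Qed.

Lemma ceil_div_leq a b c : 0 < b -> a <= c * b -> ceil_div a b <= c.
Proof.
move=> b_gt0 le_a; rewrite /ceil_div -ltnS ltn_divLR // mulSn.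
by rewrite -(prednK b_gt0) addSn ltnS addnC leq_add2l (prednK b_gt0).
Qed.

(* The fallback value [i] of [insubd] is never used once [0 < Z]. *)
Definition ord_shift K Z s (i : 'I_(K * Z)) : 'I_(K * Z) := insubd i (piN Z s i).

Section Shift.
Variable Z : nat.
Hypothesis Z_gt0 : 0 < Z.

Lemma val_ord_shift K s (i : 'I_(K * Z)) : val (ord_shift s i) = piN Z s i.
Proof. by rewrite val_insubd piN_ltn. Qed.

Lemma ord_shift_add K a b (i : 'I_(K * Z)) :
  ord_shift a (ord_shift b i) = ord_shift (a + b) i.
Proof. by apply: val_inj; rewrite !val_ord_shift piN_add. Qed.

Lemma ord_shift_mull K k (i : 'I_(K * Z)) : ord_shift (k * Z) i = i.
Proof. by apply: val_inj; rewrite val_ord_shift piN_mull. Qed.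

Lemma ord_shiftK K s (i : 'I_(K * Z)) : ord_shift s (ord_shift (s * Z.-1) i) = i.
Proof. by rewrite ord_shift_add addnC -mulnSr prednK // ord_shift_mull. Qed.

Lemma shiftsetE M s (T : {set 'I_(M * Z)}) : shiftset s T = ord_shift s @: T.
Proof.
apply/setP=> x; rewrite inE.
apply/existsP/imsetP=> [[y /andP[yT /eqP yx]]|[y yT ->]].
  by exists y => //; apply: val_inj; rewrite val_ord_shift.
by exists y; rewrite yT val_ord_shift /=.
Qed.

Variables (M N : nat) (H : 'M[bool]_(M * Z, N * Z)).
Hypothesis H_circ : block_circulant H.

Lemma block_circulant_shift s i j : H (ord_shift s i) (ord_shift s j) = H i j.
Proof.
elim: s => [|s IHs]; first by rewrite -(mul0n Z) !ord_shift_mull.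
rewrite -IHs; apply: H_circ;
  by rewrite val_ord_shift -add1n -piN_add // -val_ord_shift.
Qed.

Lemma omega_rows_shiftset s T : omega_rows H (shiftset s T) <= omega_rows H T.
Proof.
apply/bigmax_leqP=> j _; set j' := ord_shift (s * Z.-1) j.
have col_shift : [set i in shiftset s T | H i j] =
                 ord_shift s @: [set y in T | H y j'].
  apply/setP=> i; rewrite shiftsetE; apply/idP/imsetP.
    rewrite inE => /andP[/imsetP[y yT ->] Hyj]; exists y => //.
    by rewrite inE yT -(block_circulant_shift s) ord_shiftK.
  case=> y; rewrite !inE => /andP[yT Hyj'] ->.
  by move: Hyj'; rewrite (imset_f _ yT) -(block_circulant_shift s) ord_shiftK.
rewrite col_shift (leq_trans (leq_imset_card _ _)) //.
exact: (leq_bigmax_cond (F := fun j => #|[set i in T | H i j]|)).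
Qed.

End Shift.

Lemma omega_rows_bigcup m n (H : 'M[bool]_(m, n)) L (A : 'I_L -> {set 'I_m}) :
  omega_rows H (\bigcup_(l < L) A l) <= \sum_(l < L) omega_rows H (A l).
Proof.
apply/bigmax_leqP=> j _.
have col_bigcup : [set i in \bigcup_(l < L) A l | H i j] =
                  \bigcup_(l < L) [set i in A l | H i j].
  apply/setP=> i; rewrite inE; apply/andP/bigcupP=> [[/bigcupP[l _ iA] Hij]|[l _]].
    by exists l; rewrite // inE iA.
  by rewrite inE => /andP[iA ->]; split=> //; apply/bigcupP; exists l.
rewrite col_bigcup (leq_trans (card_bigcup_leq _)) // leq_sum // => l _.
exact: (leq_bigmax_cond (F := fun j => #|[set i in A l | H i j]|)).
Qed.

Theorem theorem5 (M N Z L : nat) (H : 'M[bool]_(M * Z, N * Z))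
    (S : nat) (T0 : {set 'I_(M * Z)}) :
  0 < M -> 0 < N -> 0 < Z -> 1 < L ->
  block_circulant H -> no_zero_row H -> distinct_rows H ->
  feasible L S T0 ->
  ceil_div (omega_rows H [set: 'I_(M * Z)]) L <= omega_rows H T0.
Proof.
move=> _ _ Z_gt0 L_gt1 H_circ _ _ [_ [_ cover]].
apply: ceil_div_leq; first exact: ltnW.
rewrite -cover (leq_trans (omega_rows_bigcup _ _)) //.
have -> : omega_rows H T0 * L = \sum_(l < L) omega_rows H T0.
  by rewrite sum_nat_const card_ord mulnC.
rewrite leq_sum // => l _.
exact: omega_rows_shiftset.
Qed.
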